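(* Let $\mathbf{k}$ be a commutative ring, $n\ge0$, $\mathcal{A}=\mathbf{k}[S_n]$. For every $w\in S_n$, \[\mathbf{B}_{\operatorname{LRM}'(w)}\,w = w + (\text{a }\mathbf{k}\text{-linear combination of permutations that are lexicographically smaller than } w).\]
   Context: $S_n$ is the symmetric group on $[n]=\{1,\dots,n\}$, with product $(uw)(i)=u(w(i))$. $\operatorname{Des}(u)=\{i\in[n-1]:u(i)>u(i+1)\}$; for $I\subseteq[n-1]$, $\mathbf{B}_I=\sum_{u\in S_n,\ \operatorname{Des}(u)\subseteq I}u$. $\operatorname{LRM}(w)=\{i\in[n]: w(k)>i \text{ for all } k<w^{-1}(i)\}$ (left-to-right minima), and $\operatorname{LRM}'(w)=\{\ell-1:\ell\in\operatorname{LRM}(w),\ \ell>1\}\subseteq[n-1]$. Lexicographic order on $S_n$ compares one-line notations $(\sigma(1),\dots,\sigma(n))$ lexicographically. *)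

From HB Require Import structures.
From mathcomp Require Import all_boot all_order all_algebra all_fingroup.
Set Implicit Arguments. Unset Strict Implicit. Unset Printing Implicit Defensive.
Import GRing.Theory.
Local Open Scope ring_scope.

(* Convention: S_n is realised as 'S_n = {perm 'I_n}; the element i of 'I_n
   stands for the paper's i+1 in [n]. *)

(* Paper product (u w)(i) = u (w i).  In mathcomp, (s * t)%g x = t (s x). *)
Definition pcomp (n : nat) (u w : 'S_n) : 'S_n := (w * u)%g.

Definition oneline (n : nat) (s : 'S_n) : seq nat :=
  [seq (s i).+1 | i <- enum 'I_n].

Definition pval (n : nat) (s : 'S_n) (i : nat) : nat := nth 0%N (oneline s) i.-1.

Definition Des (n : nat) (u : 'S_n) : seq nat :=
  [seq i <- iota 1 n.-1 | pval u i > pval u i.+1]%N.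

(* LRM(w) = {l in [n] : w(k) > l for all k < w^{-1}(l)} (paper indexing).
   index l (oneline w) = w^{-1}(l) - 1, so positions k < w^{-1}(l) are 1..index. *)
Definition LRM (n : nat) (w : 'S_n) : seq nat :=
  [seq l <- iota 1 n |
     all (fun k => pval w k > l)%N (iota 1 (index l (oneline w)))].

Definition LRM' (n : nat) (w : 'S_n) : seq nat :=
  [seq l.-1 | l <- LRM w & (1 < l)%N].

Fixpoint lexlt (s t : seq nat) : bool :=
  match s, t with
  | x :: s', y :: t' => (x < y)%N || ((x == y) && lexlt s' t')
  | _, _ => false
  end.

Definition galg (k : comPzRingType) (n : nat) := {ffun 'S_n -> k}.

Definition gbasis (k : comPzRingType) (n : nat) (u : 'S_n) : galg k n :=
  [ffun x => (x == u)%:R].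

Definition gmul (k : comPzRingType) (n : nat) (a b : galg k n) : galg k n :=
  [ffun x => \sum_(u : 'S_n) \sum_(v : 'S_n) (if pcomp u v == x then a u * b v else 0)].

Definition Bset (k : comPzRingType) (n : nat) (I : seq nat) : galg k n :=
  \sum_(u : 'S_n | all (fun i => i \in I) (Des u)) gbasis k u.

From Pilot Require Import Defs.
From HB Require Import structures.
From mathcomp Require Import all_boot all_order all_algebra all_fingroup.
From mathcomp Require Import zify.
Set Implicit Arguments. Unset Strict Implicit. Unset Printing Implicit Defensive.
Import GRing.Theory.

(* The coefficient of [v = u w] in [B_I w] is [1] if [Des(u) ⊆ I] and [0]
   otherwise, so it suffices to show that [u w <lex w] whenever [u <> 1] and
   [Des(u) ⊆ LRM'(w)].  Let [i] be the first position with [u(w(i)) <> w(i)]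
   and [m = w(i)].  Every left-to-right minimum [l > m] of [w] is fixed by [u]:
   it sits in [w] before position [i] (where [u w = w]) or after it (where it
   would have to be smaller than [m]).  As [u] only descends right before
   left-to-right minima, [u] is increasing between consecutive ones; hence
   [u] fixes everything from the first left-to-right minimum [L > m] on, and
   [u] is increasing on [[m, L)] with values below [L], which forces
   [u(m) < m]. *)

Lemma perm_fixed_of_ge n (s : 'S_n) (L : nat) :
  (forall z : 'I_n, L <= z -> z <= s z) ->
  forall z : 'I_n, L <= z -> s z = z.
Proof.
move=> s_ge z; have [k] := ubnP (n - z); elim: k z => // k IH z ltk Lz.
case: (eqVneq (s z) z) => // s_moved.
have lt_z_sz : z < s z by rewrite ltn_neqAle val_eqE eq_sym s_moved s_ge.
have s_fixed : s (s z) = s z.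
  by apply: IH; [have := ltn_ord (s z); lia | exact: leq_trans Lz (ltnW _)].
by move: s_moved; rewrite (perm_inj s_fixed) eqxx.
Qed.

Section MarkedDescents.

Variables (n : nat) (s : 'S_n) (P : pred 'I_n) (y0 : 'I_n).
Hypothesis descent_marked :
  forall a b : 'I_n, b = a.+1 :> nat -> s b < s a -> P b.
Hypothesis marked_fixed : forall b : 'I_n, P b -> y0 < b -> s b = b.

Lemma marked_tail_ge (L : 'I_n) : P L -> y0 < L ->
  forall z : 'I_n, L <= z -> z <= s z.
Proof.
move=> PL y0L; suff ge d (z : 'I_n) : z = L + d :> nat -> z <= s z.
  by move=> z /subnKC /esym /ge.
elim: d z => [|d IH] z zE.
  by rewrite addn0 in zE; rewrite (val_inj zE) marked_fixed.
have a_lt : L + d < n by have := ltn_ord z; lia.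
have zE' : z = (Ordinal a_lt).+1 :> nat by rewrite zE addnS.
case: (ltnP (s z) (s (Ordinal a_lt))) => [desc|asc].
  by rewrite marked_fixed ?(descent_marked zE' desc) //=; lia.
have s_ne : s (Ordinal a_lt) != s z.
  by rewrite (inj_eq perm_inj) -val_eqE /= zE'; lia.
have := IH (Ordinal a_lt) erefl; move: s_ne; rewrite -val_eqE /=; lia.
Qed.

Lemma marked_tail_fixed (L : 'I_n) : P L -> y0 < L ->
  forall z : 'I_n, L <= z -> s z = z.
Proof. by move=> PL y0L; apply: perm_fixed_of_ge; exact: marked_tail_ge. Qed.

Lemma unmarked_run_le (y : 'I_n) : y0 <= y ->
  (forall z : 'I_n, y0 < z <= y -> ~~ P z) -> s y <= y.
Proof.
have [k] := ubnP (n - y); elim: k y => // k IH y ltk y0y unmarked.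
have [b_lt|] := ltnP y.+1 n; last by have := ltn_ord (s y); lia.
set b := Ordinal b_lt.
have s_ne : val (s y) != val (s b) by rewrite val_eqE (inj_eq perm_inj) -val_eqE /=; lia.
have [Pb|nPb] := boolP (P b).
  rewrite leqNgt; apply/negP => lt_y_sy.
  have s_fixed : s (s y) = s y by apply: (marked_tail_fixed Pb) => /=; lia.
  by move: lt_y_sy; rewrite (perm_inj s_fixed) ltnn.
have sb_le : s b <= b.
  apply: IH => /=; [lia | lia | move=> z z_range].
  by have [->|zb] := eqVneq z b; [|apply: unmarked; move: zb; rewrite -val_eqE /=; lia].
have sy_le : s y <= s b.
  by rewrite leqNgt; apply/negP => desc; rewrite (descent_marked (a := y)) in nPb.
move: sb_le sy_le s_ne => /=; lia.
Qed.

Lemma marked_start_le : s y0 <= y0.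
Proof. by apply: unmarked_run_le => // z; lia. Qed.

End MarkedDescents.

Definition lrm_value n (w : 'S_n) (b : 'I_n) : bool :=
  [forall q : 'I_n, (q < (w^-1)%g b) ==> (b < w q)].

Section FirstMoved.

Variables (n : nat) (u w : 'S_n) (i : 'I_n).
Hypothesis descent_lrm :
  forall a b : 'I_n, b = a.+1 :> nat -> u b < u a -> lrm_value w b.
Hypothesis fixed_before : forall j : 'I_n, j < i -> u (w j) = w j.

Lemma lrm_value_fixed (l : 'I_n) : lrm_value w l -> w i < l -> u l = l.
Proof.
move=> /forallP lrm_l lt_wi_l; set p := (w^-1)%g l; have wp : w p = l by rewrite permKV.
case: (ltngtP i p) => [ip|pi|/val_inj ip].
- by have := implyP (lrm_l i) ip; lia.
- by rewrite -wp fixed_before.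
- by move: lt_wi_l; rewrite ip wp ltnn.
Qed.

Lemma first_moved_lt : u (w i) != w i -> u (w i) < w i.
Proof.
rewrite -val_eqE ltn_neqAle => -> /=.
exact: (marked_start_le descent_lrm lrm_value_fixed).
Qed.

End FirstMoved.

Lemma perm_first_diff n (s t : 'S_n) : s != t ->
  exists2 i : 'I_n, (forall j : 'I_n, j < i -> s j = t j) & s i != t i.
Proof.
move=> st; have [j0 j0_diff] : exists j, s j != t j.
  apply/existsP; apply: contraR st => /existsPn same.
  by apply/eqP/permP => j; apply/eqP/negPn.
have [i i_diff i_min] := @arg_minnP _ j0 (fun j => s j != t j) (@nat_of_ord n) j0_diff.
exists i => // j ji; apply/eqP; apply: contraTT ji => /i_min; lia.
Qed.

Lemma lexlt_nth (s t : seq nat) (i : nat) :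
  size s = size t -> i < size s ->
  (forall j, j < i -> nth 0 s j = nth 0 t j) ->
  nth 0 s i < nth 0 t i -> lexlt s t.
Proof.
elim: s t i => [|x s IH] [|y t] [|i] //= [size_st] lt_i same lt_nth.
- by rewrite lt_nth.
- have /= -> := same 0 isT; rewrite eqxx (IH t i) ?orbT // => j lt_ji; exact: (same j.+1).
Qed.

Lemma nth_oneline n (s : 'S_n) (j : 'I_n) : nth 0 (oneline s) j = (s j).+1.
Proof. by rewrite /oneline (nth_map j) ?size_enum_ord // nth_ord_enum. Qed.

Lemma size_oneline n (s : 'S_n) : size (oneline s) = n.
Proof. by rewrite size_map size_enum_ord. Qed.

Lemma index_oneline n (s : 'S_n) (b : 'I_n) : index b.+1 (oneline s) = (s^-1)%g b.
Proof.
rewrite -[in b.+1](permKV s b) -nth_oneline index_uniq ?size_oneline //.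
by rewrite map_inj_uniq ?enum_uniq // => x y [] /val_inj /perm_inj.
Qed.

Lemma lexlt_oneline n (s t : 'S_n) (i : 'I_n) :
  (forall j : 'I_n, j < i -> s j = t j) -> s i < t i ->
  lexlt (oneline s) (oneline t).
Proof.
move=> same lt_i; apply: (@lexlt_nth _ _ i); rewrite ?size_oneline //.
  move=> j ji; have j_lt : j < n by have := ltn_ord i; lia.
  by rewrite -[j]/(val (Ordinal j_lt)) !nth_oneline same.
by rewrite !nth_oneline.
Qed.

Lemma pvalE n (s : 'S_n) (j : 'I_n) : Defs.pval s j.+1 = (s j).+1.
Proof. exact: nth_oneline. Qed.

Lemma Des1 n : Des (1%g : 'S_n) = [::].
Proof.
have oneline1 : oneline (1%g : 'S_n) = iota 1 n.
  by rewrite -[1]addn0 iotaDl -val_enum_ord -map_comp; apply: eq_map => j; rewrite /= perm1.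
apply/eqP; rewrite -size_eq0 size_filter -leqn0 leqNgt -has_count.
by apply/hasPn => d; rewrite mem_iota /Defs.pval oneline1 => ?; rewrite !nth_iota; lia.
Qed.

(* In 0-indexed terms, the paper's descent [d] of [u] compares the entries at
   positions [d - 1] and [d], and [d \in LRM'(w)] says that the value [d] is a
   left-to-right minimum of [w]. *)
Lemma descent_in_Des n (u : 'S_n) (a b : 'I_n) :
  b = a.+1 :> nat -> u b < u a -> (b : nat) \in Des u.
Proof.
move=> bE desc; rewrite mem_filter mem_iota {2}bE !pvalE ltnS desc /=.
by have := ltn_ord b; lia.
Qed.

Lemma lrm_value_of_LRM' n (w : 'S_n) (b : 'I_n) : (b : nat) \in LRM' w -> lrm_value w b.
Proof.
case/mapP=> l; rewrite mem_filter => /andP[l_gt1 /[!mem_filter] /andP[/allP before _]] bE.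
have lE : l = b.+1 by lia.
rewrite {l_gt1 bE}lE in before.
apply/forallP => q; apply/implyP => q_lt.
by have := before q.+1; rewrite mem_iota index_oneline pvalE => /(_ ltac:(lia)).
Qed.

Local Open Scope ring_scope.

Lemma gbasisE (k : comPzRingType) n (w v : 'S_n) : gbasis k w v = (v == w)%:R.
Proof. by rewrite ffunE. Qed.

Lemma gmul_gbasisr (k : comPzRingType) n (a : galg k n) (w x : 'S_n) :
  gmul a (gbasis k w) x = a (w^-1 * x)%g.
Proof.
rewrite ffunE (eq_bigr (fun u => if (w * u)%g == x then a u else 0)); last first.
  move=> u _; rewrite (bigD1 w) //= big1 => [|v vw]; first by rewrite gbasisE eqxx mulr1 addr0.
  by rewrite gbasisE (negPf vw) mulr0; case: ifP.
rewrite -big_mkcond (big_pred1 (w^-1 * x)%g) // => u /=.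
by rewrite -(inj_eq (mulgI (w^-1)%g)) mulKg eq_sym.
Qed.

Lemma BsetE (k : comPzRingType) n (I : seq nat) (u : 'S_n) :
  Bset k n I u = (all (fun i => i \in I) (Des u))%:R.
Proof.
rewrite sum_ffunE; case: (boolP (all _ (Des u))) => desI.
  rewrite (bigD1 u) //= big1 => [|v /andP[_ vu]]; first by rewrite gbasisE eqxx addr0.
  by rewrite gbasisE eq_sym (negPf vu).
by rewrite big1 // => v desv; rewrite gbasisE; case: eqP => // uv; rewrite uv desv in desI.
Qed.

Theorem corollary3p5 (k : comPzRingType) (n : nat) (w : 'S_n) :
  exists c : galg k n,
    (forall v : 'S_n, c v != 0 -> lexlt (oneline v) (oneline w)) /\
    gmul (Bset k n (LRM' w)) (gbasis k w) = gbasis k w + c.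
Proof.
exists (gmul (Bset k n (LRM' w)) (gbasis k w) - gbasis k w).
split; last by rewrite addrC subrK.
move=> v; rewrite ffunE [in X in _ + X]ffunE gmul_gbasisr BsetE gbasisE.
have [->|vw] := eqVneq v w; first by rewrite mulVg Des1 subrr eqxx.
rewrite subr0; case: allP => [desLRM' _|]; last by rewrite eqxx.
set u := (w^-1 * v)%g in desLRM'; have vE : v = (w * u)%g by rewrite mulKVg.
have [i fixed_before moved] := perm_first_diff vw.
apply: (lexlt_oneline fixed_before); rewrite vE permM in moved *.
apply: first_moved_lt moved => [a b bE desc|j ji].
  by apply/lrm_value_of_LRM'/desLRM'/(descent_in_Des bE).
by rewrite -permM -vE fixed_before.
Qed.
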